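(* Call a butterfly partition of $n$ a partition of $n$ into distinct parts $p_1>p_2>\dots>p_k$ with $k\ge 3$, $p_1=p_2+1=p_3+2$ and $p_k\ge 2$. For $n\ge 6$ let $s_e(n)$ (resp. $s_o(n)$) be the number of butterfly partitions of $n$ whose second largest part $p_2$ is even (resp. odd). For an integer $t$ put $P_1(t)=\tfrac12(3t^2+t+4)$, $P_2(t)=\tfrac12(3(t+1)^2-t-1)$, $P_3(t)=\tfrac12(3(t+1)^2-t+3)$, $P_4(t)=\tfrac12(3(t+1)^2+t+1)$. Then for every integer $n\ge 6$: (a) $s_e(n)=s_o(n)$ if $n\notin\{P_1(t),P_2(t),P_3(t),P_4(t)\}$ for every integer $t\ge 2$; (b) $s_e(n)=s_o(n)-1$ if $n=P_1(t)$ or $n=P_4(t)$ for some integer $t\ge 2$; (c) $s_e(n)=s_o(n)+1$ if $n=P_2(t)$ or $n=P_3(t)$ for some integer $t\ge 2$. *)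

From mathcomp Require Import all_boot.
Set Implicit Arguments. Unset Strict Implicit. Unset Printing Implicit Defensive.

(* A partition of n into distinct parts p_1 > p_2 > ... > p_k is represented
   by the strictly decreasing list [:: p_1; ...; p_k] of positive naturals
   summing to n. *)
Definition distinct_partition (n : nat) (s : seq nat) : bool :=
  sorted gtn s && all (fun p => 0 < p) s && (sumn s == n).

Definition butterfly (n : nat) (s : seq nat) : bool :=
  [&& distinct_partition n s, 3 <= size s,
      nth 0 s 0 == (nth 0 s 1).+1,
      nth 0 s 0 == (nth 0 s 2).+2
    & 2 <= last 0 s].

(* All partitions of n into distinct parts: every such partition has its parts
   in {1,...,n}, so it is the decreasing enumeration of a subset of 'I_n.+1.
   We list the decreasing enumerations of all subsets of 'I_n.+1 and keep the
   distinct partitions of n; this list has no duplicates. *)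
Definition distinct_partitions (n : nat) : seq (seq nat) :=
  [seq s <- [seq sort geq [seq val i | i <- enum A] | A : {set 'I_n.+1}]
     | distinct_partition n s].

Definition butterflies (n : nat) : seq (seq nat) :=
  [seq s <- distinct_partitions n | butterfly n s].

Definition s_e (n : nat) : nat := count (fun s => ~~ odd (nth 0 s 1)) (butterflies n).
Definition s_o (n : nat) : nat := count (fun s => odd (nth 0 s 1)) (butterflies n).

(* The four quadratic polynomials (values are integers; divisions are exact). *)
Definition P1 (t : nat) : nat := (3 * t ^ 2 + t + 4) %/ 2.
Definition P2 (t : nat) : nat := (3 * (t + 1) ^ 2 - t - 1) %/ 2.
Definition P3 (t : nat) : nat := (3 * (t + 1) ^ 2 - t + 3) %/ 2.
Definition P4 (t : nat) : nat := (3 * (t + 1) ^ 2 + t + 1) %/ 2.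

From mathcomp Require Import all_boot zify.
Set Implicit Arguments. Unset Strict Implicit. Unset Printing Implicit Defensive.

(* A butterfly partition is a strictly decreasing list of parts >= 3 whose
   first three parts are consecutive, followed by an optional part 2.  On the
   parts >= 3 we run Franklin's involution: if the smallest part s is at most
   the slope (the number of leading consecutive parts), remove it and add 1 to
   the s largest parts; otherwise subtract 1 from the slope-many largest parts
   and append the slope as a new part.  Both moves keep all parts >= 3 and the
   slope >= 3, preserve the sum, and shift the second largest part by one, so
   they pair butterflies with p_2 even and odd.  The pairing fails only on
   the pentagonal lists [2r+e-1; ...; r+e] with e = 0 or 1; a
   butterfly built on one of them has p_2 of parity e and size
   (3r^2 + (2e-1)r)/2 + 2f, where f records the part 2.  These sizes are
   pairwise distinct and are exactly the values P_i(t). *)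

Lemma gtn_trans : transitive gtn.
Proof. exact: rev_trans ltn_trans. Qed.

Lemma pairwise_gtn_head l : pairwise gtn l -> all (fun x => x <= head 0 l) l.
Proof.
case: l => //= x l /andP[lt_x _]; rewrite leqnn; apply: sub_all lt_x => y /=; lia.
Qed.

Lemma pairwise_gtn_last l : pairwise gtn l -> all (fun x => last 0 l <= x) l.
Proof.
elim/last_ind: l => //= l x _; rewrite pairwise_rcons last_rcons all_rcons leqnn.
by case/andP=> gt_x _; apply: sub_all gt_x => y /=; lia.
Qed.

Lemma leq_sumn_mem (s : seq nat) x : x \in s -> x <= sumn s.
Proof. by elim: s => //= y s IH; rewrite in_cons => /orP[/eqP ->|/IH]; lia. Qed.

Lemma count_involution (T : eqType) (f : T -> T) (p : pred T) (s : seq T) :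
  uniq s -> {in s, forall x, f x \in s} -> {in s, involutive f} ->
  {in s, forall x, p (f x) = ~~ p x} -> count p s = count (predC p) s.
Proof.
move=> s_uniq f_s f_inv f_p.
have s_perm : perm_eq s (map f s).
  apply: uniq_perm => //.
    by rewrite map_inj_in_uniq // => x y xs ys fxy; rewrite -(f_inv x xs) fxy f_inv.
  move=> x; apply/idP/mapP => [xs | [y ys ->]]; last exact: f_s.
  by exists (f x); [exact: f_s | rewrite f_inv].
by rewrite (permP s_perm) count_map; apply: eq_in_count => x /f_p.
Qed.

(** * Staircases and Franklin's slope *)

Fixpoint stair (a r : nat) : seq nat :=
  if r is r'.+1 then (a + r') :: stair a r' else [::].

Lemma size_stair a r : size (stair a r) = r.
Proof. by elim: r => //= r ->. Qed.

Lemma stairD a m k : stair a (m + k) = stair (a + k) m ++ stair a k.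
Proof. by elim: m => //= m ->; rewrite addnAC addnA. Qed.

Lemma take_stair a r k : k <= r -> take k (stair a r) = stair (a + (r - k)) k.
Proof. by move=> /subnKC {1}<-; rewrite stairD take_size_cat ?size_stair. Qed.

Lemma last_stair x a r : last x (stair a r.+1) = a.
Proof. by elim: r x => [|r IH] x /=; [rewrite addn0 | apply: IH]. Qed.

Lemma mem_stair a r x : (x \in stair a r) = (a <= x < a + r).
Proof. by elim: r => [|r IH] /=; rewrite ?in_nil ?in_cons ?IH; lia. Qed.

Lemma map_succn_stair a r : map succn (stair a r) = stair a.+1 r.
Proof. by elim: r => //= r ->; rewrite addSn. Qed.

Lemma map_predn_stair a r : 0 < a -> map predn (stair a r) = stair a.-1 r.
Proof. by move=> a_gt0; elim: r => //= r ->; congr (_ :: _); lia. Qed.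

Lemma sumn_stair a r : 2 * sumn (stair a r) + r = r * (2 * a + r).
Proof. by elim: r => //= r IH; nia. Qed.

Lemma pairwise_stair a r : pairwise gtn (stair a r).
Proof.
elim: r => //= r ->; rewrite andbT; apply/allP => x; rewrite mem_stair /=; lia.
Qed.

Lemma pairwise_stair_cat a r rest : 0 < r ->
  pairwise gtn (stair a r ++ rest) = pairwise gtn rest && all (fun y => y < a) rest.
Proof.
move=> r_gt0; rewrite pairwise_cat pairwise_stair andTb andbC; congr (_ && _).
apply/allrelP/allP => [gt_a y y_rest|lt_a x y].
  by apply: (gt_a a) => //; rewrite mem_stair; lia.
by rewrite mem_stair => /andP[ax _] /lt_a /=; lia.
Qed.

Fixpoint slope (l : seq nat) : nat :=
  if l is x :: l' then
    if l' is y :: _ then (if x == y.+1 then (slope l').+1 else 1) else 1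
  else 0.

Lemma slope_cons2 x y l :
  slope [:: x, y & l] = if x == y.+1 then (slope (y :: l)).+1 else 1.
Proof. by []. Qed.

Lemma slope_gt0 x l : 0 < slope (x :: l).
Proof. by case: l => //= y l; case: ifP. Qed.

Lemma slope_le_size l : slope l <= size l.
Proof. by elim: l => // x [|y l] IH //=; case: eqP => // _; move: IH => /=; lia. Qed.

Lemma slope_stair_cat_ge a r rest : 0 < r -> r <= slope (stair a r ++ rest).
Proof.
elim: r => // -[|r] IH _; first exact: slope_gt0.
by rewrite /= addnS eqxx ltnS; apply: IH.
Qed.

Lemma slope_stair_cat a r rest : 0 < r -> (rest = [::] \/ (head 0 rest).+1 != a) ->
  slope (stair a r ++ rest) = r.
Proof.
move=> + brk; elim: r => // -[|r] IH _; last by move: IH; rewrite /= addnS eqxx => ->.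
by move: brk {IH}; case: rest => [|y l] //= [] // /negbTE; rewrite addn0 eq_sym => ->.
Qed.

Lemma slope_stair a r : 0 < r -> slope (stair a r) = r.
Proof. by move=> r_gt0; rewrite -[stair a r]cats0 slope_stair_cat //; left. Qed.

Lemma slope_decomp l : l != [::] -> exists a rest,
  l = stair a (slope l) ++ rest /\ (rest = [::] \/ (head 0 rest).+1 != a).
Proof.
elim: l => // x [|y l] IH _; first by exists x, [::]; rewrite /= addn0; split; [|left].
rewrite slope_cons2; case: eqP => [xy|/eqP xy]; last first.
  by exists x, (y :: l); rewrite /= addn0; split; [|right; rewrite eq_sym].
have [a [rest [E brk]]] := IH isT; exists a, rest; split => //.
move: E xy; have := slope_gt0 y l; case: (slope (y :: l)) => // r _ E ->.
by rewrite E; case: E => -> _; rewrite /= addnS.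
Qed.

(** * Franklin's involution *)

Definition core_shape (l : seq nat) : bool :=
  [&& pairwise gtn l, all (leq 3) l & 3 <= slope l].

Definition pentagonal (l : seq nat) : bool :=
  (l == stair (size l) (size l)) || (l == stair (size l).+1 (size l)).

Definition franklin (l : seq nat) : seq nat :=
  let r := slope l in let s := last 0 l in
  if s <= r then let l' := take (size l).-1 l in map succn (take s l') ++ drop s l'
  else map predn (take r l) ++ drop r l ++ [:: r].

Lemma pentagonal_slope l : pentagonal l -> slope l = size l.
Proof.
by case/orP=> /eqP E; rewrite E size_stair; case: (size l) => // r; rewrite slope_stair.
Qed.

Lemma pentagonal_last l : pentagonal l -> l != [::] ->
  last 0 l = size l \/ last 0 l = (size l).+1.
Proof.
by case/orP=> /eqP E; rewrite E size_stair; case: (size l) => // r _;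
  rewrite last_stair; [left|right].
Qed.

Definition franklin_data c s (m : seq nat) : bool :=
  [&& 3 <= s, s < c, pairwise gtn m, all (fun x => s < x) m & all (fun x => x < c) m].

Definition base_form c s (m : seq nat) : seq nat := stair c s ++ m ++ [:: s].
Definition slope_form c s (m : seq nat) : seq nat := stair c.+1 s ++ m.

Section FranklinForms.

Variables (c s : nat) (m : seq nat).
Hypothesis data : franklin_data c s m.

Lemma slope_slope_form : slope (slope_form c s m) = s.
Proof.
case/and5P: data => s_ge3 _ _ _ m_lt_c.
rewrite slope_stair_cat; [done | lia |].
by case: m m_lt_c => [|y m'] /=; [left | rewrite eqSS => /andP[y_lt _]; right; lia].
Qed.

Lemma franklin_base_form : franklin (base_form c s m) = slope_form c s m.
Proof.
case/and5P: data => s_ge3 _ _ _ _.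
rewrite /franklin /base_form !last_cat /= slope_stair_cat_ge; last lia.
rewrite catA size_cat addn1 /= take_size_cat; last by rewrite size_cat size_stair.
by rewrite take_size_cat ?drop_size_cat ?size_stair // map_succn_stair.
Qed.

Lemma franklin_slope_form : franklin (slope_form c s m) = base_form c s m.
Proof.
case/and5P: data => s_ge3 s_lt_c _ m_gt_s _.
have last_gt : s < last 0 (slope_form c s m).
  rewrite /slope_form last_cat; case: m m_gt_s => [|y m'] gt_s /=.
    by case: s s_ge3 s_lt_c => // s' _ lt_c; rewrite last_stair; lia.
  exact: (allP gt_s) _ (mem_last _ _).
rewrite /franklin slope_slope_form leqNgt last_gt /= /slope_form.
by rewrite take_size_cat ?drop_size_cat ?size_stair // map_predn_stair.
Qed.

Lemma core_shape_base_form : core_shape (base_form c s m).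
Proof.
case/and5P: data => s_ge3 s_lt_c m_pw m_gt_s m_lt_c.
apply/and3P; split.
- rewrite /base_form pairwise_stair_cat; last lia.
  by rewrite pairwise_cat m_pw allrel1r /= andbT all_cat /= s_lt_c m_lt_c m_gt_s.
- rewrite /base_form !all_cat /= s_ge3 andbT; apply/andP; split.
    by apply/allP => x; rewrite mem_stair /=; lia.
  by rewrite andbT; apply: sub_all m_gt_s => x /=; lia.
- by apply: leq_trans (slope_stair_cat_ge _ _ _); last lia.
Qed.

Lemma core_shape_slope_form : core_shape (slope_form c s m).
Proof.
case/and5P: data => s_ge3 s_lt_c m_pw m_gt_s m_lt_c.
apply/and3P; split; last by rewrite slope_slope_form.
- rewrite /slope_form pairwise_stair_cat; last lia.
  by rewrite m_pw; apply: sub_all m_lt_c => x /=; lia.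
- rewrite /slope_form all_cat; apply/andP; split.
    by apply/allP => x; rewrite mem_stair /=; lia.
  by apply: sub_all m_gt_s => x /=; lia.
Qed.

Lemma base_form_not_pentagonal : ~~ pentagonal (base_form c s m).
Proof.
have nonempty : base_form c s m != [::] by rewrite /base_form; case: (stair c s) => //; case: m.
apply/negP => /pentagonal_last /(_ nonempty).
by rewrite /base_form !last_cat !size_cat size_stair /=; lia.
Qed.

Lemma slope_form_not_pentagonal : ~~ pentagonal (slope_form c s m).
Proof.
case/and5P: data => s_ge3 s_lt_c _ _ _.
apply/negP => pent; have := pentagonal_slope pent.
rewrite slope_slope_form /slope_form size_cat size_stair.
case: m pent => [|y m'] pent /= size_eq; last lia.
have nonempty : slope_form c s [::] != [::] by case: s s_ge3 {pent size_eq}.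
move: (pentagonal_last pent nonempty); rewrite /slope_form cats0 size_stair.
by case: s s_ge3 s_lt_c {pent nonempty size_eq} => // s' _ lt_c; rewrite last_stair; lia.
Qed.

Lemma sumn_base_form : sumn (base_form c s m) = sumn (slope_form c s m).
Proof.
rewrite /base_form /slope_form !sumn_cat /=.
have := sumn_stair c s; have := sumn_stair c.+1 s; nia.
Qed.

Lemma odd_second_slope_form :
  odd (nth 0 (slope_form c s m) 1) = ~~ odd (nth 0 (base_form c s m) 1).
Proof.
by case/and5P: data; case: s => [|[|s']] // _ _ _ _ _; rewrite /= addSn negbK.
Qed.

End FranklinForms.

Lemma base_formP l : core_shape l -> ~~ pentagonal l -> last 0 l <= slope l ->
  exists c m, franklin_data c (last 0 l) m /\ l = base_form c (last 0 l) m.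
Proof.
case/lastP: l => [|l' s]; first by case/and3P.
rewrite last_rcons => shape npent s_le_slope.
have l_nonempty : rcons l' s != [::] by case: (l').
have [a [rest [l_stair _]]] := slope_decomp l_nonempty.
set l := rcons l' s in l_nonempty shape npent s_le_slope l_stair *.
set r := slope l in s_le_slope l_stair.
have s_ge3 : 3 <= s.
  by case/and3P: shape => _ /allP /(_ s); rewrite /l mem_rcons mem_head => /(_ isT).
have s_lt_size : s < size l.
  rewrite ltn_neqAle (leq_trans s_le_slope (slope_le_size l)) andbT.
  apply: contra npent => /eqP s_size.
  have r_size : r = size l by have := slope_le_size l; lia.
  have size_l : size l = r + size rest by rewrite {1}l_stair size_cat size_stair.
  have rest0 : rest = [::] by apply/nilP; rewrite /nilp; lia.
  have a_s : a = s.
    move: (last_rcons 0 l' s); rewrite -/l l_stair rest0 cats0.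
    by case: (r) s_le_slope => [|r' _]; [lia | rewrite last_stair].
  by rewrite /pentagonal -r_size {1}l_stair rest0 cats0 a_s s_size r_size eqxx.
have take_l' : take s l' = stair (a + (r - s)) s.
  have <- : take s l = take s l'.
    by rewrite /l -cats1 takel_cat //; move: s_lt_size; rewrite size_rcons.
  by rewrite l_stair takel_cat ?size_stair // take_stair.
have l_base : l = base_form (a + (r - s)) s (drop s l').
  by rewrite /base_form -take_l' catA cat_take_drop cats1.
exists (a + (r - s)), (drop s l'); split => //.
move: shape; rewrite l_base => /and3P[+ _ _].
rewrite pairwise_stair_cat; last lia.
rewrite pairwise_cat allrel1r all_cat /= andbT.
by rewrite /franklin_data s_ge3; case/and4P=> /andP[-> ->] -> ->.
Qed.

Lemma slope_formP l : core_shape l -> ~~ pentagonal l -> slope l < last 0 l ->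
  exists c m, franklin_data c (slope l) m /\ l = slope_form c (slope l) m.
Proof.
move=> shape npent r_lt_s; have /and3P[l_pw l_ge3 r_ge3] := shape.
have l_nonempty : l != [::] by case: (l) r_ge3.
have [a [rest [l_stair brk]]] := slope_decomp l_nonempty.
set r := slope l in r_lt_s r_ge3 l_stair.
have a_ge3 : 3 <= a.
  by move/allP: l_ge3 => /(_ a); rewrite {1}l_stair mem_cat mem_stair; apply; lia.
have l_last := pairwise_gtn_last l_pw.
move: l_pw l_last; rewrite {1 3}l_stair pairwise_stair_cat ?all_cat; last lia.
case/andP=> rest_pw rest_lt_a /andP[_ rest_ge_s].
have [r_lt_c rest_lt_c] : r < a.-1 /\ all (fun x => x < a.-1) rest.
  case: rest brk l_stair rest_pw rest_lt_a rest_ge_s => [_ l_stair _ _ _ | y t].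
    have l_last : last 0 l = a.
      by rewrite l_stair cats0; case: (r) r_ge3 => // r' _; rewrite last_stair.
    have size_l : size l = r by rewrite l_stair cats0 size_stair.
    have a_ne : a != r.+1.
      apply: contra npent => /eqP a_eq; apply/orP; right.
      by rewrite size_l {1}l_stair cats0 a_eq.
    by split => //; lia.
  case=> // y_a l_stair /[dup] /pairwise_gtn_head le_y _ lt_a _; rewrite /= in y_a.
  have last_le_y : last 0 l <= y.
    by rewrite l_stair last_cat; apply: (allP le_y); apply: mem_last.
  split; first by move: (allP lt_a y (mem_head y t)) y_a; lia.
  by apply: sub_all le_y => x /=; move: (allP lt_a y (mem_head y t)) y_a; lia.
exists a.-1, rest; rewrite /slope_form prednK; last lia.
split => //; apply/and5P; split => //.
by apply: sub_all rest_ge_s => x /=; lia.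
Qed.

Lemma franklin_involution l : core_shape l -> ~~ pentagonal l ->
  [/\ core_shape (franklin l), ~~ pentagonal (franklin l), franklin (franklin l) = l,
      sumn (franklin l) = sumn l & odd (nth 0 (franklin l) 1) = ~~ odd (nth 0 l 1)].
Proof.
move=> shape npent.
have [c [s [m [data [->|->]]]]] : exists c s m,
    franklin_data c s m /\ (l = base_form c s m \/ l = slope_form c s m).
  case: (leqP (last 0 l) (slope l)) => [le_slope|lt_last].
    have [c [m [data E]]] := base_formP shape npent le_slope.
    by exists c, (last 0 l), m; split; [|left].
  have [c [m [data E]]] := slope_formP shape npent lt_last.
  by exists c, (slope l), m; split; [|right].
- rewrite franklin_base_form // franklin_slope_form // sumn_base_form //.
  split; rewrite ?odd_second_slope_form //.
    exact: core_shape_slope_form.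
  exact: slope_form_not_pentagonal.
- rewrite franklin_slope_form // franklin_base_form // sumn_base_form //.
  split; rewrite ?odd_second_slope_form ?negbK //.
    exact: core_shape_base_form.
  exact: base_form_not_pentagonal.
Qed.

(** * Butterfly partitions *)

Definition core (x : seq nat) : seq nat := [seq p <- x | 2 < p].

Lemma core_cat_nseq2 l (f : bool) : all (leq 3) l -> core (l ++ nseq f 2) = l.
Proof.
by move=> l_ge3; rewrite /core filter_cat (all_filterP l_ge3); case: f; rewrite ?cats0.
Qed.

Lemma mem2_cat_nseq2 l (f : bool) : all (leq 3) l -> (2 \in l ++ nseq f 2) = f.
Proof.
move=> l_ge3; rewrite mem_cat; have -> : 2 \in l = false.
  by apply/negbTE/negP => /(allP l_ge3).
by case: f.
Qed.

Lemma cat_core_nseq2 x : pairwise gtn x -> all (leq 2) x -> x = core x ++ nseq (2 \in x) 2.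
Proof.
elim: x => //= y t IH /andP[lt_y t_pw] /andP[y_ge2 t_ge2].
case: (ltngtP y 2) y_ge2 => // [y_gt2 | y2] _.
  by rewrite /core /= in_cons (ltn_eqF y_gt2) /= {1}(IH t_pw t_ge2).
have -> : t = [::].
  by case: t {IH t_pw} lt_y t_ge2 => // z t /andP[+ _] /andP[+ _]; rewrite -y2 /=; lia.
by rewrite y2.
Qed.

Lemma slope_ge3 l : 3 <= slope l -> exists c t, l = [:: c.+2, c.+1, c & t].
Proof.
case: l => [|a [|b [|c t]]] //; first by rewrite slope_cons2; case: ifP.
rewrite !slope_cons2; case: ifP => // /eqP ->; case: ifP => // /eqP -> _.
by exists c, t.
Qed.

Lemma butterfly_cat_nseq2 l (f : bool) :
  core_shape l -> butterfly (sumn (l ++ nseq f 2)) (l ++ nseq f 2).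
Proof.
case/and3P=> l_pw l_ge3 /slope_ge3[c [t l_eq]].
have l_gt0 : all (leq 1) l by apply: sub_all l_ge3 => y /=; lia.
apply/and5P; split; try by rewrite l_eq.
- rewrite /distinct_partition eqxx andbT sorted_pairwise ?pairwise_cat ?l_pw ?all_cat ?l_gt0;
    last exact: gtn_trans.
  by case: f; rewrite /= ?allrel1r ?allrel0r ?andbT.
- rewrite last_cat; case: f => //=.
  by case: l l_eq l_ge3 {l_pw l_gt0} => // x s _ /allP /(_ _ (mem_last x s)) /=; lia.
Qed.

Lemma butterfly_decomp n x : butterfly n x ->
  [/\ x = core x ++ nseq (2 \in x) 2, sumn x = n & core_shape (core x) \/ x = [:: 4; 3; 2]].
Proof.
case/and5P=> /andP[/andP[x_sorted _] /eqP x_sum] x_size x01 x02 x_last.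
rewrite sorted_pairwise in x_sorted; last exact: gtn_trans.
have x_ge2 : all (leq 2) x.
  by apply: sub_all (pairwise_gtn_last x_sorted) => y /=; lia.
split => //; first exact: cat_core_nseq2.
case: x x_size x01 x02 x_sorted x_ge2 {x_sum x_last} => [|a [|b [|c t]]] // _ /eqP a_b /eqP a_c.
rewrite /= in a_b a_c; have {a_b} -> : b = c.+1 by lia.
rewrite {}a_c => x_pw x_ge2; have /and4P[_ _ c_ge2 t_ge2] := x_ge2.
have c_t : all (gtn c) t by case/and4P: x_pw.
case: (ltngtP c 2) c_ge2 => // [c_gt2 | c2] _; last first.
  have -> : t = [::].
    by case: t {x_pw x_ge2} c_t t_ge2 => // z t /andP[+ _] /andP[+ _]; rewrite c2 /=; lia.
  by rewrite c2; right.
left; apply/and3P; split.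
- exact: pairwise_filter.
- exact: filter_all.
- have c1_gt2 : 2 < c.+1 by lia.
  have c2_gt2 : 2 < c.+2 by lia.
  rewrite /core /= c_gt2 c1_gt2 c2_gt2 !slope_cons2 !eqxx.
  by have := slope_gt0 c (core t).
Qed.

Definition franklin_butterfly (x : seq nat) : seq nat :=
  franklin (core x) ++ nseq (2 \in x) 2.

Lemma franklin_butterfly_involution n x : butterfly n x -> ~~ pentagonal (core x) ->
  [/\ butterfly n (franklin_butterfly x), ~~ pentagonal (core (franklin_butterfly x)),
      franklin_butterfly (franklin_butterfly x) = x
    & odd (nth 0 (franklin_butterfly x) 1) = ~~ odd (nth 0 x 1)].
Proof.
move=> bx npent; have [x_eq x_sum [shape | x432]] := butterfly_decomp bx; last first.
  by rewrite x432 in npent.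
have [shape' npent' invol sum_eq parity] := franklin_involution shape npent.
have ge3 l : core_shape l -> all (leq 3) l by case/and3P.
have size_gt2 l : core_shape l -> 2 < size l.
  by case/and3P=> _ _ /leq_trans; apply; apply: slope_le_size.
have core_fb : core (franklin_butterfly x) = franklin (core x) by rewrite core_cat_nseq2 ?ge3.
have two_fb : (2 \in franklin_butterfly x) = (2 \in x) by rewrite mem2_cat_nseq2 ?ge3.
split.
- have := butterfly_cat_nseq2 (2 \in x) shape'.
  by rewrite sumn_cat sum_eq -sumn_cat -x_eq x_sum.
- by rewrite core_fb.
- by rewrite /franklin_butterfly core_fb two_fb invol -x_eq.
- by rewrite {2}x_eq !nth_cat !(leq_trans _ (size_gt2 _ _)).
Qed.

Lemma mem_butterflies n x : (x \in butterflies n) = butterfly n x.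
Proof.
rewrite mem_filter; apply/andP/idP => [[] // | bx]; split => //.
have /and5P[x_part _ _ _ _] := bx; rewrite mem_filter x_part /=.
case/andP: x_part => /andP[x_sorted _] /eqP x_sum.
move: x_sorted; rewrite gtn_sorted_uniq_geq => /andP[x_uniq x_sorted].
have geq_trans : transitive geq by exact: rev_trans leq_trans.
apply/mapP; exists [set i : 'I_n.+1 | val i \in x]; first by rewrite mem_enum.
rewrite -{1}(sorted_sort geq_trans x_sorted); apply/esym/perm_sortP => //.
- by move=> ? ?; exact: leq_total.
- by move=> y z /andP[? ?]; apply/eqP; rewrite eqn_leq; apply/andP.
apply: uniq_perm => //; first by rewrite map_inj_uniq ?enum_uniq //; exact: val_inj.
move=> y; apply/mapP/idP => [[i] | y_x]; first by rewrite mem_enum inE => ? ->.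
have y_lt : y < n.+1 by rewrite ltnS -x_sum leq_sumn_mem.
by exists (Ordinal y_lt); rewrite // mem_enum inE.
Qed.

Lemma butterflies_uniq n : uniq (butterflies n).
Proof.
do 2!apply: filter_uniq; rewrite map_inj_uniq ?enum_uniq // => A B eq_sort.
apply/setP => i; have := congr1 (fun s => val i \in s) eq_sort.
by rewrite /= !mem_sort !(mem_map val_inj) !mem_enum.
Qed.

(** * Pentagonal butterflies *)

Definition pentagonal_butterflies n := [seq x <- butterflies n | pentagonal (core x)].

Lemma s_e_s_o_balance n :
  s_e n + count (fun x => odd (nth 0 x 1)) (pentagonal_butterflies n) =
  s_o n + count (fun x => ~~ odd (nth 0 x 1)) (pentagonal_butterflies n).
Proof.
set Y := [seq x <- butterflies n | ~~ pentagonal (core x)].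
have split_count p : count p (butterflies n) = count p (pentagonal_butterflies n) + count p Y.
  by rewrite -count_cat (permP (permEl (perm_filterC _ _))).
have Y_balanced : count (fun x => odd (nth 0 x 1)) Y = count (fun x => ~~ odd (nth 0 x 1)) Y.
  have Y_spec x : x \in Y -> butterfly n x /\ ~~ pentagonal (core x).
    by rewrite mem_filter mem_butterflies => /andP[].
  apply: (count_involution (f := franklin_butterfly)).
  - exact/filter_uniq/butterflies_uniq.
  - move=> x /Y_spec[bx npent]; have [bfx npentfx _ _] := franklin_butterfly_involution bx npent.
    by rewrite mem_filter npentfx mem_butterflies.
  - by move=> x /Y_spec[bx npent]; have [] := franklin_butterfly_involution bx npent.
  - by move=> x /Y_spec[bx npent]; have [] := franklin_butterfly_involution bx npent.
rewrite /s_e /s_o !split_count Y_balanced; lia.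
Qed.

Definition pentagon (e f : bool) (r : nat) : seq nat := stair (r + e) r ++ nseq f 2.

(* Apart from the lists with r >= 3, the only pentagonal butterfly is [:: 4; 3; 2]. *)
Definition pentagon_ok (e f : bool) (r : nat) : bool := (2 < r) || [&& r == 2, e & f].

Lemma sumn_pentagon e f r : 2 * sumn (pentagon e f r) + r = 3 * r * r + 2 * e * r + 4 * f.
Proof. by rewrite sumn_cat; have := sumn_stair (r + e) r; case: e; case: f => /=; lia. Qed.

Lemma odd_second_pentagon e f r : 1 < r -> odd (nth 0 (pentagon e f r) 1) = e.
Proof. by case: r => [|[|r]] // _; rewrite /= negbK addnAC oddD addnn odd_double oddb. Qed.

Lemma core_pentagon e f r : pentagon_ok e f r -> core (pentagon e f r) = stair (r + e) r.
Proof.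
move=> ok; apply: core_cat_nseq2; apply/allP => x; rewrite mem_stair.
by case/orP: ok => [|/and3P[/eqP -> -> _]] /=; lia.
Qed.

Lemma butterfly_pentagon e f r : pentagon_ok e f r ->
  butterfly (sumn (pentagon e f r)) (pentagon e f r).
Proof.
case/orP=> [r_gt2 | /and3P[/eqP -> ]]; last by case: e; case: f.
apply: butterfly_cat_nseq2; apply/and3P; split; first exact: pairwise_stair.
  by apply/allP => x; rewrite mem_stair; lia.
by rewrite slope_stair //; lia.
Qed.

Lemma pentagonal_pentagon e f r : pentagon_ok e f r -> pentagonal (core (pentagon e f r)).
Proof.
by move/core_pentagon->; rewrite /pentagonal size_stair; case: e; rewrite ?addn0 ?addn1 eqxx ?orbT.
Qed.

Lemma pentagonal_butterfly n x : butterfly n x -> pentagonal (core x) ->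
  exists e f r, pentagon_ok e f r /\ x = pentagon e f r.
Proof.
case/butterfly_decomp=> x_eq _ [shape | ->] pent; last by exists true, true, 2.
have size_gt2 : 2 < size (core x).
  by case/and3P: shape => _ _ /leq_trans; apply; apply: slope_le_size.
case/orP: pent => /eqP core_eq.
  exists false, (2 \in x), (size (core x)); split; first by rewrite /pentagon_ok size_gt2.
  by rewrite /pentagon addn0 -core_eq.
exists true, (2 \in x), (size (core x)); split; first by rewrite /pentagon_ok size_gt2.
by rewrite /pentagon addn1 -core_eq.
Qed.

Lemma pentagon_inj e f r e' f' r' : pentagon_ok e f r -> pentagon_ok e' f' r' ->
  sumn (pentagon e f r) = sumn (pentagon e' f' r') -> pentagon e f r = pentagon e' f' r'.
Proof.
move=> ok ok' sum_eq; suff [-> -> ->] : [/\ e = e', f = f' & r = r'] by [].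
have := sumn_pentagon e f r; have := sumn_pentagon e' f' r'; rewrite -sum_eq.
move: ok ok' {sum_eq}; rewrite /pentagon_ok.
by case: e; case: f; case: e'; case: f' => /=; case: (ltngtP r r') => [lt|lt|<-] //=; nia.
Qed.

Lemma pentagonal_butterflies_pentagon e f r : pentagon_ok e f r ->
  pentagonal_butterflies (sumn (pentagon e f r)) = [:: pentagon e f r].
Proof.
move=> ok; apply: perm_small_eq => //; apply: uniq_perm => //.
  exact/filter_uniq/butterflies_uniq.
move=> x; rewrite mem_filter mem_butterflies mem_seq1.
apply/andP/eqP => [[pent bx] | ->]; last by rewrite pentagonal_pentagon ?butterfly_pentagon.
have [e' [f' [r' [ok' x_eq]]]] := pentagonal_butterfly bx pent.
have /and5P[/andP[_ /eqP x_sum] _ _ _ _] := bx.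
by rewrite x_eq; apply: pentagon_inj; rewrite -?x_eq.
Qed.

Lemma pentagonal_butterflies_nil n :
  (forall e f r, pentagon_ok e f r -> sumn (pentagon e f r) <> n) ->
  pentagonal_butterflies n = [::].
Proof.
move=> no_pentagon; apply: perm_small_eq => //; apply: uniq_perm => //.
  exact/filter_uniq/butterflies_uniq.
move=> x; rewrite mem_filter mem_butterflies in_nil; apply/negP => /andP[pent bx].
have [e [f [r [ok x_eq]]]] := pentagonal_butterfly bx pent.
have /and5P[/andP[_ /eqP x_sum] _ _ _ _] := bx.
by apply: (no_pentagon e f r ok); rewrite -x_eq.
Qed.

Lemma P1_pentagon t : P1 t = sumn (pentagon true true t).
Proof.
have := sumn_pentagon true true t; rewrite /P1 => sum_eq.
by rewrite (_ : 3 * t ^ 2 + t + 4 = 2 * sumn (pentagon true true t)) ?mulKn //; lia.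
Qed.

Lemma P2_pentagon t : P2 t = sumn (pentagon false false t.+1).
Proof.
have := sumn_pentagon false false t.+1; rewrite /P2 => sum_eq.
by rewrite (_ : 3 * (t + 1) ^ 2 - t - 1 = 2 * sumn (pentagon false false t.+1)) ?mulKn //; lia.
Qed.

Lemma P3_pentagon t : P3 t = sumn (pentagon false true t.+1).
Proof.
have := sumn_pentagon false true t.+1; rewrite /P3 => sum_eq.
by rewrite (_ : 3 * (t + 1) ^ 2 - t + 3 = 2 * sumn (pentagon false true t.+1)) ?mulKn //; lia.
Qed.

Lemma P4_pentagon t : P4 t = sumn (pentagon true false t.+1).
Proof.
have := sumn_pentagon true false t.+1; rewrite /P4 => sum_eq.
by rewrite (_ : 3 * (t + 1) ^ 2 + t + 1 = 2 * sumn (pentagon true false t.+1)) ?mulKn //; lia.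
Qed.

Lemma s_e_s_o_pentagon e f r : pentagon_ok e f r ->
  s_e (sumn (pentagon e f r)) + e = s_o (sumn (pentagon e f r)) + ~~ e.
Proof.
move=> ok; have r_gt1 : 1 < r by case/orP: ok => [/ltnW|/and3P[/eqP ->]].
have := s_e_s_o_balance (sumn (pentagon e f r)).
by rewrite pentagonal_butterflies_pentagon //= odd_second_pentagon // !addn0.
Qed.

Lemma pentagon_ok_gt2 e f r : 2 < r -> pentagon_ok e f r.
Proof. by rewrite /pentagon_ok => ->. Qed.

Lemma pentagon_okTT r : 1 < r -> pentagon_ok true true r.
Proof. by rewrite /pentagon_ok !andbT; lia. Qed.

Lemma sumn_pentagon_P e f r : pentagon_ok e f r ->
  exists2 t, 2 <= t & sumn (pentagon e f r) \in [:: P1 t; P2 t; P3 t; P4 t].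
Proof.
case: r => [|r] ok; first by case/orP: ok.
have r_ge2 : ~~ (e && f) -> 2 <= r.
  by move: ok; rewrite /pentagon_ok; case: e; case: f; rewrite /= ?andbF ?orbF.
case: e ok r_ge2; case: f => ok r_ge2.
- exists r.+1; first by case/orP: ok => [/ltnW|/and3P[/eqP ->]].
  by rewrite -P1_pentagon mem_head.
- by exists r; rewrite ?r_ge2 // -P4_pentagon !inE eqxx !orbT.
- by exists r; rewrite ?r_ge2 // -P3_pentagon !inE eqxx !orbT.
- by exists r; rewrite ?r_ge2 // -P2_pentagon !inE eqxx !orbT.
Qed.

Lemma s_e_s_o_no_pentagon n :
  (forall e f r, pentagon_ok e f r -> sumn (pentagon e f r) <> n) -> s_e n = s_o n.
Proof.
by move=> no_pentagon; have := s_e_s_o_balance n; rewrite pentagonal_butterflies_nil /= ?addn0.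
Qed.

Theorem theorem4p6 (n : nat) (hn : 6 <= n) :
  [/\ (forall t : nat, 2 <= t ->
         [/\ n <> P1 t, n <> P2 t, n <> P3 t & n <> P4 t]) ->
        s_e n = s_o n,
      (exists2 t : nat, 2 <= t & n = P1 t \/ n = P4 t) -> s_e n + 1 = s_o n
    & (exists2 t : nat, 2 <= t & n = P2 t \/ n = P3 t) -> s_e n = s_o n + 1].
Proof.
split.
- move=> no_P; apply: s_e_s_o_no_pentagon => e f r ok sum_n.
  have [t t_ge2] := sumn_pentagon_P ok; have [] := no_P t t_ge2.
  by rewrite sum_n !inE => ? ? ? ?; case/or4P=> /eqP.
- case=> t t_ge2 [|] ->.
    by move: (s_e_s_o_pentagon (pentagon_okTT t_ge2)); rewrite -P1_pentagon /= addn0.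
  by move: (s_e_s_o_pentagon (@pentagon_ok_gt2 true false t.+1 t_ge2));
    rewrite -P4_pentagon /= addn0.
- case=> t t_ge2 [|] ->.
    by move: (s_e_s_o_pentagon (@pentagon_ok_gt2 false false t.+1 t_ge2));
      rewrite -P2_pentagon /= addn0.
  by move: (s_e_s_o_pentagon (@pentagon_ok_gt2 false true t.+1 t_ge2));
    rewrite -P3_pentagon /= addn0.
Qed.
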